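(* Let $\vec W$ be an irreducible $\mathcal Y$-valued transition matrix on $\mathcal X$. For every $g'\in\mathcal G$ there exists a unique $g\in\mathcal G_1$ with $g-g'\in\mathcal N$. Consequently $\mathcal G_1$ is a complement of $\mathcal N$ in $\mathcal G$, and the quotient map restricts to a linear isomorphism $\mathcal G_1\cong\mathcal G/\mathcal N$.
   Context: Let $\mathcal X=\{1,\dots,d\}$, $\mathcal Y=\{1,\dots,d_Y\}$ be finite sets, $u_{\mathcal X}\in\mathbb R^{\mathcal X}$ the all-ones vector. A $\mathcal Y$-valued transition matrix on $\mathcal X$ is a family $\vec W=(W_y)_{y\in\mathcal Y}$ of $d\times d$ nonnegative matrices $W_y(x|x')$ ($x$ row, $x'$ column) with $|\vec W|:=\sum_yW_y$ column-stochastic; irreducible means $|\vec W|$ irreducible. Let $S:=\{(y,x,x'):W_y(x|x')>0\}$ be the support of $\vec W$ and $\mathcal G$ the vector space of real functions on $S$; an element $g\in\mathcal G$ is identified with the tuple $(g_y)_y$ of $d\times d$ matrices $g_y(x|x')=g(y,x,x')$ (set to $0$ off $S$). Define $(\vec W_*g)_y(x|x'):=g(y,x,x')W_y(x|x')$. $\mathcal N:=\{g\in\mathcal G:\ g(y,x,x')=f(x)-f(x')+c$ on $S$ for some $f:\mathcal X\to\mathbb R$, $c\in\mathbb R\}$. $\mathcal G_1:=\{g\in\mathcal G:\ \sum_{y}(\vec W_*g)_y^Tu_{\mathcal X}=0\}$, i.e. $\sum_{y,x}g(y,x,x')W_y(x|x')=0$ for all $x'$. *)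

From HB Require Import structures.
From mathcomp Require Import all_boot all_order all_algebra.
Set Implicit Arguments. Unset Strict Implicit. Unset Printing Implicit Defensive.
Import Order.TTheory GRing.Theory Num.Theory.
Local Open Scope ring_scope.

(* X = 'I_d, Y = 'I_dY.  A Y-valued transition matrix is W : 'I_dY -> 'M[R]_d,
   with W y x x' = W_y(x|x')  (x row, x' column). *)
Definition trans_mx (R : realFieldType) (d dY : nat) := 'I_dY -> 'M[R]_d.

Definition absW (R : realFieldType) (d dY : nat) (W : trans_mx R d dY) : 'M[R]_d :=
  \sum_(y < dY) W y.

Definition is_transition (R : realFieldType) (d dY : nat) (W : trans_mx R d dY) : Prop :=
  (forall y x x', 0 <= W y x x') /\
  (forall x' : 'I_d, \sum_(x < d) absW W x x' = 1).

Definition irreducible_mx (R : realFieldType) (d : nat) (A : 'M[R]_d) : Prop :=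
  forall i j : 'I_d, connect (fun a b : 'I_d => 0 < A b a) i j.

Definition irreducible_trans (R : realFieldType) (d dY : nat) (W : trans_mx R d dY) : Prop :=
  irreducible_mx (absW W).

Definition inS (R : realFieldType) (d dY : nat) (W : trans_mx R d dY)
  (y : 'I_dY) (x x' : 'I_d) : Prop := 0 < W y x x'.

(* Elements of G: real functions on S, identified with tuples of d x d
   matrices that vanish off S. *)
Definition gfun (R : realFieldType) (d dY : nat) := 'I_dY -> 'I_d -> 'I_d -> R.

Definition inG (R : realFieldType) (d dY : nat) (W : trans_mx R d dY) (g : gfun R d dY) : Prop :=
  forall y x x', ~ inS W y x x' -> g y x x' = 0.

Definition inN (R : realFieldType) (d dY : nat) (W : trans_mx R d dY) (g : gfun R d dY) : Prop :=
  inG W g /\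
  exists (f : 'I_d -> R) (c : R),
    forall y x x', inS W y x x' -> g y x x' = f x - f x' + c.

(* G_1 : sum_y (W_* g)_y^T u_X = 0 *)
Definition inG1 (R : realFieldType) (d dY : nat) (W : trans_mx R d dY) (g : gfun R d dY) : Prop :=
  inG W g /\
  forall x' : 'I_d, \sum_(y < dY) \sum_(x < d) g y x x' * W y x x' = 0.

Definition gsub (R : realFieldType) (d dY : nat) (g g' : gfun R d dY) : gfun R d dY :=
  fun y x x' => g y x x' - g' y x x'.

From HB Require Import structures.
From mathcomp Require Import all_boot all_order all_algebra.
From mathcomp Require Import zify lra.
From Stdlib Require Import FunctionalExtensionality.
Set Implicit Arguments. Unset Strict Implicit. Unset Printing Implicit Defensive.
Import Order.TTheory GRing.Theory Num.Theory.
Local Open Scope ring_scope.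

(* With P := |W| and the linear map L(f, c)(x') := sum_x P(x|x') f(x) - f(x') + c,
   the G_1 condition on g := g' + (f(x) - f(x') + c) reads L(f, c) = -b, where b
   collects the W-weighted column sums of g'.  Irreducibility gives a maximum
   principle: a function with L(h, 0) >= 0 is constant.  Hence the kernel of L
   is spanned by (1, 0), so L : R^(1+d) -> R^d has rank d and is onto; this gives
   existence, and the kernel description gives uniqueness. *)

Section ColumnStochastic.
Variables (R : realFieldType) (d : nat) (P : 'M[R]_d).

Definition Lop (f : 'I_d -> R) (c : R) (x' : 'I_d) : R :=
  \sum_(x < d) P x x' * f x - f x' + c.

Lemma LopB (f1 f2 : 'I_d -> R) (c1 c2 : R) x' :
  Lop (fun x => f1 x - f2 x) (c1 - c2) x' = Lop f1 c1 x' - Lop f2 c2 x'.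
Proof.
rewrite /Lop (eq_bigr (fun x => P x x' * f1 x - P x x' * f2 x)).
  by rewrite sumrB; lra.
by move=> x _; rewrite mulrBr.
Qed.

Hypothesis P_ge0 : forall x x', 0 <= P x x'.
Hypothesis P_colsum : forall x', \sum_(x < d) P x x' = 1.
Hypothesis P_irr : irreducible_mx P.

Lemma subharmonic_const (h : 'I_d -> R) :
  (forall x', h x' <= \sum_(x < d) P x x' * h x) -> forall a b, h a = h b.
Proof.
move=> h_sub a b.
case: (arg_maxP h (P := predT) (isT : predT a)) => m _ h_le_m.
(* Averaging h against column u cannot exceed h m = h u, so every x with
   P x u > 0 must already attain the maximum. *)
have max_step u v : h u = h m -> 0 < P v u -> h v = h m.
  move=> hu Pvu.
  have gap_ge0 x : 0 <= P x u * (h m - h x).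
    by rewrite mulr_ge0 // subr_ge0; apply: h_le_m.
  have gap0 : \sum_(x < d) P x u * (h m - h x) = 0.
    apply/eqP; rewrite eq_le sumr_ge0 ?andbT //.
    rewrite (eq_bigr (fun x => P x u * h m - P x u * h x)); last by move=> x _; rewrite mulrBr.
    by rewrite sumrB -mulr_suml P_colsum mul1r -{1}hu subr_le0 h_sub.
  have /eqP := @psumr_eq0P _ _ predT _ (fun x _ => gap_ge0 x) gap0 v isT.
  by rewrite mulf_eq0 (gt_eqF Pvu) subr_eq0 => /eqP.
have h_max j : h j = h m.
  have /connectP [p + ->] := P_irr m j.
  elim: p {1 3 4}m (erefl (h m)) => [|v p IH] u hu //= /andP [Puv p_path].
  exact: IH (max_step u v hu Puv) p_path.
by rewrite !h_max.
Qed.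

Lemma Lop_ker_const (h : 'I_d -> R) (k : R) :
  (forall x', Lop h k x' = 0) -> forall a b, h a = h b.
Proof.
rewrite /Lop => hk a b.
case: (lerP k 0) => [k_le0|k_gt0].
  by apply: subharmonic_const => x'; have := hk x'; lra.
apply/eqP; rewrite -eqr_opp; apply/eqP; move: a b.
apply: subharmonic_const => x'; have := hk x'.
rewrite (eq_bigr (fun x => - (P x x' * - h x))); last by move=> x _; rewrite mulrN opprK.
by rewrite sumrN; lra.
Qed.

Lemma Lop_ker_shift (h : 'I_d -> R) (k : R) (x0 : 'I_d) :
  (forall x', Lop h k x' = 0) -> k = 0.
Proof.
move=> hk; have := hk x0; rewrite /Lop.
rewrite (eq_bigr (fun x => P x x0 * h x0)); last by move=> x _; rewrite (Lop_ker_const hk x x0).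
by rewrite -mulr_suml P_colsum mul1r subrr add0r.
Qed.

(* L as a matrix acting on row vectors (c, f). *)
Let Lmx : 'M[R]_(1 + d, d) := col_mx (const_mx 1) (P - 1%:M).

Let Lmx_row (c : 'rV[R]_1) (f : 'rV[R]_d) x' :
  (row_mx c f *m Lmx) 0 x' = Lop (f 0) (c 0 0) x'.
Proof.
rewrite /Lmx /Lop mul_row_col mulmxBr mulmx1 !mxE big_ord1 !mxE mulr1 addrC.
by congr (_ - _ + _); apply: eq_bigr => x _; rewrite mulrC.
Qed.

Let rank_ker_Lmx (x0 : 'I_d) : (\rank (kermx Lmx) <= 1)%N.
Proof.
apply: leq_trans (rank_leq_row (row_mx 0 (const_mx 1) : 'rV[R]_(1 + d))).
apply: mxrankS; apply/row_subP => i.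
have : row i (kermx Lmx) *m Lmx = 0 by rewrite -row_mul mulmx_ker row0.
rewrite -(hsubmxK (row i (kermx Lmx))).
move: (lsubmx _) (rsubmx _) => c f ker_cf.
have hk x' : Lop (f 0) (c 0 0) x' = 0 by rewrite -Lmx_row ker_cf mxE.
apply/submxP; exists (f 0 x0)%:M; rewrite mul_scalar_mx.
apply/rowP => j; rewrite !mxE; case: splitP => j' _; rewrite !mxE.
  by rewrite ord1 (Lop_ker_shift x0 hk) mulr0.
by rewrite mulr1 (Lop_ker_const hk j' x0).
Qed.

Lemma Lop_surj (r : 'I_d -> R) : exists f c, forall x', Lop f c x' = r x'.
Proof.
case: (posnP d) => [d0|d_gt0].
  by exists (fun _ => 0), 0 => x'; have := ltn_ord x'; rewrite {2}d0.
have full : row_full Lmx.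
  have := rank_ker_Lmx (Ordinal d_gt0); rewrite mxrank_ker /row_full => ?.
  by apply/eqP; have := rank_leq_col Lmx; lia.
have /submxP [D HD] := submx_full (\row_x r x) full.
exists (rsubmx D 0), (lsubmx D 0 0) => x'.
by rewrite -Lmx_row hsubmxK -HD mxE.
Qed.

End ColumnStochastic.

Section TransitionMatrix.
Variables (R : realFieldType) (d dY : nat) (W : trans_mx R d dY).
Hypothesis W_ge0 : forall y x x', 0 <= W y x x'.
Hypothesis W_colsum : forall x', \sum_(x < d) absW W x x' = 1.

Definition wsum (g : gfun R d dY) (x' : 'I_d) : R :=
  \sum_(y < dY) \sum_(x < d) g y x x' * W y x x'.

Definition potential (f : 'I_d -> R) (c : R) : gfun R d dY :=
  fun _ x x' => f x - f x' + c.

Lemma absW_ge0 x x' : 0 <= absW W x x'.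
Proof. by rewrite /absW summxE; apply: sumr_ge0. Qed.

Lemma eq_wsum_supp (g1 g2 : gfun R d dY) :
  (forall y x x', inS W y x x' -> g1 y x x' = g2 y x x') -> wsum g1 =1 wsum g2.
Proof.
move=> eq_supp x'; apply: eq_bigr => y _; apply: eq_bigr => x _.
by have := W_ge0 y x x'; rewrite le_eqVlt => /orP [/eqP <-|/eq_supp ->]; rewrite ?mulr0.
Qed.

Lemma wsumD (g1 g2 : gfun R d dY) x' :
  wsum (fun y x x' => g1 y x x' + g2 y x x') x' = wsum g1 x' + wsum g2 x'.
Proof.
rewrite /wsum -big_split; apply: eq_bigr => y _.
by rewrite -big_split; apply: eq_bigr => x _; rewrite mulrDl.
Qed.

Lemma wsum_potential f c x' : wsum (potential f c) x' = Lop (absW W) f c x'.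
Proof.
rewrite /wsum exchange_big /Lop /=.
rewrite (eq_bigr (fun x => absW W x x' * f x + absW W x x' * (c - f x'))); last first.
  move=> x _; rewrite /absW summxE !mulr_suml -big_split.
  by apply: eq_bigr => y _ /=; rewrite /potential; lra.
by rewrite big_split /= -mulr_suml W_colsum mul1r; lra.
Qed.

Lemma wsum_shift (g g' : gfun R d dY) f c :
  (forall y x x', inS W y x x' -> g y x x' = g' y x x' + potential f c y x x') ->
  forall x', wsum g x' = wsum g' x' + Lop (absW W) f c x'.
Proof. by move=> /eq_wsum_supp eq_g x'; rewrite eq_g wsumD wsum_potential. Qed.

End TransitionMatrix.

Theorem mainTheorem8 (R : realFieldType) (d dY : nat) (W : trans_mx R d dY) :
  is_transition W -> irreducible_trans W ->
  forall g' : gfun R d dY, inG W g' ->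
    exists! g : gfun R d dY, inG1 W g /\ inN W (gsub g g').
Proof.
move=> [W_ge0 W_colsum] W_irr g' g'_G.
have P_ge0 := absW_ge0 W_ge0.
have [f [c Lfc]] := Lop_surj P_ge0 W_colsum W_irr (fun x' => - wsum W g' x').
pose g y x x' := if 0 < W y x x' then g' y x x' + potential f c y x x' else 0.
have g_supp y x x' : inS W y x x' -> g y x x' = g' y x x' + potential f c y x x'.
  by rewrite /g /inS => ->.
have g_off y x x' : ~ inS W y x x' -> g y x x' = 0 by rewrite /g /inS => /negP/negbTE ->.
exists g; split.
  split; first by split=> // x'; rewrite -/(wsum W g x') (wsum_shift W_ge0 W_colsum g_supp) Lfc addrN.
  split; first by move=> y x x' nS; rewrite /gsub g_off // g'_G // subr0.
  by exists f, c => y x x' S; rewrite /gsub g_supp // /potential addrC addKr.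
move=> g1 [[g1_G g1_G1] [_ [f1 [c1 g1_N]]]].
have g1_supp y x x' : inS W y x x' -> g1 y x x' = g' y x x' + potential f1 c1 y x x'.
  by move=> /g1_N; rewrite /gsub /potential => <-; rewrite addrC subrK.
have Lker x' : Lop (absW W) (fun x => f1 x - f x) (c1 - c) x' = 0.
  have := g1_G1 x'; rewrite -/(wsum W g1 x') (wsum_shift W_ge0 W_colsum g1_supp).
  by rewrite LopB Lfc; lra.
have f_const := Lop_ker_const P_ge0 W_colsum W_irr Lker.
apply: functional_extensionality => y; apply: functional_extensionality => x.
apply: functional_extensionality => x'.
have [S|nS] := boolP (0 < W y x x').
  have := f_const x x'; have := Lop_ker_shift P_ge0 W_colsum W_irr x Lker.
  by rewrite (g_supp _ _ _ S) (g1_supp _ _ _ S) /potential; lra.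
by rewrite g_off ?g1_G //; apply/negP.
Qed.
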